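(* Let $m\ge3$ be even and let $(M,g)$ be a unimodular $\Phi_1\Phi_2\Phi_m^\ast$-lattice. Then: (1) if $m=2^k$ is a power of $2$, then $M_m$ is $2$-elementary, and $M^g$ and $M^{-g}$ are both $4$-elementary; (2) if $m=2p^k$ with $p$ an odd prime, then $M_m$ is $p$-elementary, $M^{-g}$ is $2p$-elementary and $M^g$ is $2$-elementary; (3) otherwise, $M_m$ is unimodular, and $M^g$ and $M^{-g}$ are both $2$-elementary.
   Context: $\Phi_i$ denotes the $i$-th cyclotomic polynomial. A lattice with isometry $(M,g)$ is a $\mathbb{Z}$-lattice $M$ (nondegenerate integral symmetric bilinear form) with $g\in O(M)$; it is a $\mu^\ast$-lattice if the minimal polynomial of $g$ is exactly $\mu$. $M_m:=\ker\Phi_m(g)$, $M^g=\ker(g-1)$, $M^{-g}=\ker(g+1)$, each with the restricted form. A lattice $L$ is $n$-elementary if $nD_L=0$ where $D_L=L^\vee/L$, and unimodular if $D_L=0$. *)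

From HB Require Import structures.
From mathcomp Require Import all_boot all_order all_algebra all_field.
Set Implicit Arguments. Unset Strict Implicit. Unset Printing Implicit Defensive.
Import Order.TTheory GRing.Theory Num.Theory.
Local Open Scope ring_scope.

(* Conventions: a Z-lattice of rank n.+1 is Z^(n.+1) (row vectors 'rV[int])
   with bilinear form b(x,y) = x B y^T for a symmetric Gram matrix B.
   An endomorphism g acts on row vectors by x |-> x *m g.
   A sublattice is given by a predicate L on integer row vectors. *)

Definition ratv n (x : 'rV[int]_n) : 'rV[rat]_n := map_mx intr x.

Definition bform n (B : 'M[int]_n) (x y : 'rV[rat]_n) : rat :=
  (x *m map_mx intr B *m y^T) 0 0.

Definition inL n (L : 'rV[int]_n -> Prop) (y : 'rV[rat]_n) : Prop :=
  exists x, L x /\ ratv x = y.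

Definition inQspan n (L : 'rV[int]_n -> Prop) (y : 'rV[rat]_n) : Prop :=
  exists d : nat, (0 < d)%N /\ inL L (d%:R *: y).

Definition dual n (B : 'M[int]_n) (L : 'rV[int]_n -> Prop) (y : 'rV[rat]_n) : Prop :=
  inQspan L y /\ forall x, L x -> bform B y (ratv x) \is a Num.int.

(* L (with form restricted from B) is k-elementary: k D_L = 0, i.e. k L^vee ⊆ L *)
Definition elementary n (B : 'M[int]_n) (L : 'rV[int]_n -> Prop) (k : nat) : Prop :=
  forall y, dual B L y -> inL L (k%:R *: y).

Definition unimodular n (B : 'M[int]_n) (L : 'rV[int]_n -> Prop) : Prop :=
  elementary B L 1.

Definition fullL n : 'rV[int]_n -> Prop := fun _ => True.

Definition kerL n (g : 'M[int]_n.+1) (p : {poly int}) : 'rV[int]_n.+1 -> Prop :=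
  fun x => x *m horner_mx g p = 0.

Definition is_isometry n (B g : 'M[int]_n) : Prop := g *m B *m g^T = B.

Definition minpolyZ n (g : 'M[int]_n.+1) : {poly rat} := mxminpoly (map_mx intr g).

From HB Require Import structures.
From mathcomp Require Import all_boot all_order all_algebra all_field.
From mathcomp Require Import ring.
Import Order.TTheory GRing.Theory Num.Theory.
Local Open Scope ring_scope.
Set Implicit Arguments. Unset Strict Implicit. Unset Printing Implicit Defensive.

(* Let P be one of the factors X - 1, X + 1, 'Phi_m of the minimal polynomial and R
   the product of the other two, so that (P R)(g) = 0.  If k = a P + c R in Z[X] and
   y lies in the dual of ker P(g), then for every z in M
     b(k y, z) = b(y, z a(g) P(g)) + b(y, z c(g) R(g)).
   The second term is an integer since z c(g) R(g) lies in ker P(g).  The first one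
   vanishes because ker P(g) is orthogonal to ker R(g): k ker R(g) lies in the image
   of P(g), and b(u (g - e), v) = 0 whenever v g = e v with e = +-1; for P = 'Phi_m
   one splits ker (g^2 - 1) into its two eigenspaces.  Hence k y is in the dual of
   M, which is M, and so in ker P(g).
   Suitable k come from S = sum_(i < q) X^((m/q) i) for a divisor q > 1 of m:
   'Phi_m divides S, S(1) = q, and S(-1) = q when m/q is even.  This puts q into
   ('Phi_m, X^2 - 1) and 2q into (X -+ 1, (X +- 1) 'Phi_m).  Taking gcds gives the
   three cases: q = 2 if m = 2^k; q = p, and q = 2 for X - 1, if m = 2 p^k; and two
   coprime q otherwise. *)

Definition int_in_ideal (p r : {poly int}) (k : nat) : Prop :=
  exists a c, k%:R%:P = a * p + c * r.

Lemma int_in_idealC p r k : int_in_ideal p r k -> int_in_ideal r p k.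
Proof. by case=> a [c kE]; exists c, a; rewrite kE addrC. Qed.

Lemma int_in_ideal_mulr p r h k : int_in_ideal p (h * r) k -> int_in_ideal p r k.
Proof. by case=> a [c kE]; exists a, (c * h); rewrite kE mulrA. Qed.

Lemma int_in_ideal_gcd p r k1 k2 :
  int_in_ideal p r k1 -> int_in_ideal p r k2 -> int_in_ideal p r (gcdn k1 k2).
Proof.
move=> [a1 [c1 k1E]] [a2 [c2 k2E]]; have [u [v uvE]] := Bezoutz k1 k2.
exists (u%:P * a1 + v%:P * a2), (u%:P * c1 + v%:P * c2).
have -> : (gcdn k1 k2)%:R = u * k1%:R + v * k2%:R :> int by rewrite !natz uvE.
by rewrite polyCD !polyCM k1E k2E; ring.
Qed.

Lemma int_in_ideal_XsubC f x k : f.[x] = k%:R -> int_in_ideal ('X - x%:P) f k.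
Proof.
move=> fx; have /factor_theorem[u uE] : root (f - k%:R%:P) x.
  by rewrite /root hornerD hornerN hornerC fx subrr.
by exists (- u), 1; rewrite mulNr -uE; ring.
Qed.

Lemma int_in_ideal_X2sub1 f k : f.[1] = k%:R -> f.[-1] = k%:R ->
  int_in_ideal f (('X - 1) * ('X + 1)) k.
Proof.
move=> f1 fN1; have /factor_theorem[u uE] : root (f - k%:R%:P) 1.
  by rewrite /root hornerD hornerN hornerC f1 subrr.
have /factor_theorem[v vE] : root u (-1).
  have : (f - k%:R%:P).[-1] = 0 by rewrite hornerD hornerN hornerC fN1 subrr.
  rewrite uE hornerM !hornerE => /eqP; rewrite mulf_eq0 => /orP[] //.
have fE : f = k%:R%:P + v * ('X - (-1)%:P) * ('X - 1%:P) by rewrite -vE -uE; ring.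
by exists 1, (- v); rewrite fE polyCN polyC1; ring.
Qed.

Lemma Cyclotomic1 : 'Phi_1 = 'X - 1.
Proof. by rewrite -(prod_Cyclotomic (isT : (0 < 1)%N)) big_seq1. Qed.

Lemma Cyclotomic2 : 'Phi_2 = 'X + 1.
Proof.
have := prod_Cyclotomic (isT : (0 < 2)%N); rewrite [divisors 2]/= big_cons big_seq1.
rewrite Cyclotomic1 -[in RHS](mul1r 1) -expr2 subr_sqr => /mulfI; apply.
by rewrite -polyC1 polyXsubC_eq0.
Qed.

Lemma Cyclotomic_dvd_geom m q : (0 < m)%N -> (1 < q)%N -> (q %| m)%N ->
  exists h, \sum_(i < q) 'X^(m %/ q) ^+ i = h * 'Phi_m.
Proof.
move=> m_gt0 q_gt1 q_dvd; set t := (m %/ q)%N.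
have tqE : (t * q)%N = m by apply: divnK.
have t_gt0 : (0 < t)%N by rewrite divn_gt0 ?(ltnW q_gt1) // dvdn_leq.
have t_dvd : (t %| m)%N by apply/dvdnP; exists q; rewrite mulnC.
have t_lt : (t < m)%N by apply: ltn_Pdiv.
have Xt_neq0 : 'X^t - 1 != 0 :> {poly int}.
  by rewrite -polyC1 monic_neq0 // monicXnsubC.
have XmE : 'X^m - 1 = ('X^t - 1) * \sum_(i < q) 'X^t ^+ i :> {poly int}.
  by rewrite -subrX1 -exprM tqE.
have XtE : \prod_(d <- divisors m | (d %| t)%N) 'Phi_d = 'X^t - 1.
  rewrite -big_filter -(prod_Cyclotomic t_gt0); apply/perm_big/uniq_perm.
  - exact/filter_uniq/divisors_uniq.
  - exact: divisors_uniq.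
  move=> d; rewrite mem_filter -!dvdn_divisors //.
  by apply/andP/idP=> [[] //|d_dvd]; split=> //; apply: dvdn_trans t_dvd.
have m_not_dvd_t : ~~ (m %| t)%N by rewrite gtnNdvd.
exists (\prod_(d <- [seq d <- divisors m | ~~ (d %| t)%N] | d != m) 'Phi_d).
apply: (mulfI Xt_neq0); rewrite -XmE -(prod_Cyclotomic m_gt0) (bigID (dvdn^~ t)) /=.
rewrite XtE -big_filter (bigD1_seq m) ?filter_uniq ?divisors_uniq //.
  by congr (_ * _); rewrite mulrC.
by rewrite mem_filter m_not_dvd_t -dvdn_divisors // dvdnn.
Qed.

Lemma horner_geom (R : comNzRingType) t q (x : R) : x ^+ t = 1 ->
  (\sum_(i < q) 'X^t ^+ i).[x] = q%:R.
Proof.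
move=> xt; rewrite horner_sum -[q in RHS]card_ord -sumr_const.
by apply: eq_bigr => i _; rewrite horner_exp hornerXn xt expr1n.
Qed.

Lemma int_in_ideal_Xsub1_Cyclotomic m q : (0 < m)%N -> (1 < q)%N -> (q %| m)%N ->
  int_in_ideal ('X - 1) (('X + 1) * 'Phi_m) (2 * q).
Proof.
move=> m_gt0 q_gt1 q_dvd; have [h hE] := Cyclotomic_dvd_geom m_gt0 q_gt1 q_dvd.
apply: (@int_in_ideal_mulr _ _ h); rewrite mulrCA -hE -polyC1.
apply: int_in_ideal_XsubC; rewrite hornerM horner_geom ?expr1n //.
by rewrite !hornerE natrM.
Qed.

Definition cyclotomic_bezout m k0 k1 k2 : Prop :=
  [/\ int_in_ideal 'Phi_m (('X - 1) * ('X + 1)) k0,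
      int_in_ideal ('X - 1) (('X + 1) * 'Phi_m) k1 &
      int_in_ideal ('X + 1) (('X - 1) * 'Phi_m) k2].

Lemma cyclotomic_bezout_cofactor m q : (0 < m)%N -> (1 < q)%N -> (q %| m)%N ->
  ~~ odd (m %/ q) -> cyclotomic_bezout m q (2 * q) (2 * q).
Proof.
move=> m_gt0 q_gt1 q_dvd cofactor_even.
have [h hE] := Cyclotomic_dvd_geom m_gt0 q_gt1 q_dvd; set S := \sum_(i < q) _ in hE.
have S1 : S.[1] = q%:R by rewrite horner_geom ?expr1n.
have SN1 : S.[-1] = q%:R by rewrite horner_geom // -signr_odd (negPf cofactor_even).
split.
- apply/int_in_idealC/(@int_in_ideal_mulr _ _ h)/int_in_idealC.
  by rewrite -hE; apply: int_in_ideal_X2sub1.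
- exact: int_in_ideal_Xsub1_Cyclotomic.
- apply: (@int_in_ideal_mulr _ _ (- h)).
  have -> : - h * (('X - 1) * 'Phi_m) = (1 - 'X) * S by rewrite hE; ring.
  have -> : 'X + 1 = 'X - (-1)%:P :> {poly int} by rewrite polyCN polyC1 opprK.
  apply: int_in_ideal_XsubC.
  by rewrite hornerM SN1 !hornerE opprK natrM.
Qed.

Lemma cyclotomic_bezout_gcd m a0 a1 a2 b0 b1 b2 :
  cyclotomic_bezout m a0 a1 a2 -> cyclotomic_bezout m b0 b1 b2 ->
  cyclotomic_bezout m (gcdn a0 b0) (gcdn a1 b1) (gcdn a2 b2).
Proof. by case=> a0P a1P a2P [b0P b1P b2P]; split; apply: int_in_ideal_gcd. Qed.

Lemma even_divn_odd m q : ~~ odd m -> odd q -> (q %| m)%N -> ~~ odd (m %/ q).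
Proof. by move=> + q_odd /divnK mE; rewrite -{1}mE oddM q_odd andbT. Qed.

Lemma exists_prime_dvdn_neq p n : (0 < n)%N -> ~ (exists k, n = p ^ k)%N ->
  exists q, [/\ prime q, q != p & (q %| n)%N].
Proof.
move=> n_gt0 not_pow.
have [/hasP[q]|/hasPn p_only] := boolP (has (predC1 p) (primes n)).
  by rewrite mem_primes n_gt0 => /andP[q_pr q_dvd] q_neq; exists q.
have p_nat : p.-nat n.
  by rewrite /pnat n_gt0; apply/allP => q /p_only; rewrite /= negbK inE.
by case: not_pow; have [k ->] := p_natP p_nat; exists k.
Qed.

Lemma coprime_even_cofactors m : (0 < m)%N -> ~~ odd m ->
  ~ (exists k, m = 2 ^ k)%N -> ~ (exists p k, [/\ prime p, odd p & m = 2 * p ^ k])%N ->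
  exists q1 q2, [/\ coprime q1 q2,
    [&& 1 < q1, q1 %| m & ~~ odd (m %/ q1)] & [&& 1 < q2, q2 %| m & ~~ odd (m %/ q2)]]%N.
Proof.
move=> m_gt0 m_even not_pow2 not_2pk.
have [p [p_pr p_neq2 p_dvd]] := exists_prime_dvdn_neq m_gt0 not_pow2.
have p_odd : odd p by case: (even_prime p_pr) p_neq2 => ->.
have p_ok : [&& 1 < p, p %| m & ~~ odd (m %/ p)]%N.
  by rewrite prime_gt1 // p_dvd even_divn_odd.
have [m4 | m_not4] := boolP (4 %| m)%N.
  exists p, 2%N; split=> //; first by rewrite coprime_sym prime_coprime // dvdn2 p_odd.
  by rewrite /= dvdn2 m_even -(divnK m4) -[4%N]/(2 * 2)%N mulnA mulnK // oddM andbF.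
have mE : m = (2 * (m %/ 2))%N by rewrite mulnC divnK // dvdn2.
have o_odd : odd (m %/ 2).
  by move: m_not4; rewrite {1}mE -[4%N]/(2 * 2)%N dvdn_pmul2l // dvdn2 negbK.
have o_not_ppow : ~ (exists k, m %/ 2 = p ^ k)%N.
  by case=> k oE; apply: not_2pk; exists p, k; rewrite mE oE.
have [q [q_pr q_neq q_dvd]] := exists_prime_dvdn_neq (odd_gt0 o_odd) o_not_ppow.
have q_odd : odd q by apply: contraLR o_odd; rewrite -!dvdn2 => /dvdn_trans; apply.
have q_dvd_m : (q %| m)%N by rewrite mE dvdn_mull.
exists p, q; split=> //; first by rewrite prime_coprime // dvdn_prime2 // eq_sym.
by rewrite prime_gt1 // q_dvd_m even_divn_odd.
Qed.

Lemma cyclotomic_bezout_pow2 k : (3 <= 2 ^ k)%N -> cyclotomic_bezout (2 ^ k) 2 4 4.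
Proof.
case: k => [|[|k]] // _; apply: cyclotomic_bezout_cofactor => //.
- by rewrite expn_gt0.
- by rewrite dvdn_exp.
- by rewrite expnS mulKn // oddX.
Qed.

Lemma cyclotomic_bezout_2pk p k : prime p -> odd p -> (3 <= 2 * p ^ k)%N ->
  cyclotomic_bezout (2 * p ^ k) p 2 (2 * p).
Proof.
move=> p_pr p_odd; case: k => [|k] // _; set m := (2 * p ^ k.+1)%N.
have m_gt0 : (0 < m)%N by rewrite muln_gt0 expn_gt0 (prime_gt0 p_pr).
have [Phi_p Xsub1_2p Xadd1_2p] : cyclotomic_bezout m p (2 * p) (2 * p).
  apply: cyclotomic_bezout_cofactor; rewrite ?prime_gt1 //.
    by rewrite dvdn_mull // dvdn_exp.
  by rewrite /m expnS mulnCA mulKn ?prime_gt0 // oddM.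
have Xsub1_4 : int_in_ideal ('X - 1) (('X + 1) * 'Phi_m) (2 * 2).
  by apply: int_in_ideal_Xsub1_Cyclotomic; rewrite ?dvdn_mulr.
split=> //; have := int_in_ideal_gcd Xsub1_2p Xsub1_4; rewrite -muln_gcdr.
suff /eqP -> : coprime p 2 by [].
by rewrite coprime_sym prime_coprime // dvdn2 p_odd.
Qed.

Lemma cyclotomic_bezout_generic m : (0 < m)%N -> ~~ odd m ->
  ~ (exists k, m = 2 ^ k)%N -> ~ (exists p k, [/\ prime p, odd p & m = 2 * p ^ k])%N ->
  cyclotomic_bezout m 1 2 2.
Proof.
move=> m_gt0 m_even not_pow2 not_2pk.
have [q1 [q2 [q12_coprime]]] := coprime_even_cofactors m_gt0 m_even not_pow2 not_2pk.
case/and3P=> [q1_gt1 q1_dvd q1_even] /and3P[q2_gt1 q2_dvd q2_even].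
have := cyclotomic_bezout_gcd (cyclotomic_bezout_cofactor m_gt0 q1_gt1 q1_dvd q1_even)
  (cyclotomic_bezout_cofactor m_gt0 q2_gt1 q2_dvd q2_even).
by rewrite -!muln_gcdr (eqP q12_coprime).
Qed.

Lemma map_mx_intr_inj k l : injective (map_mx intr : 'M[int]_(k, l) -> 'M[rat]_(k, l)).
Proof.
by move=> x y /matrixP xy; apply/matrixP=> i j; have := xy i j; rewrite !mxE => /intr_inj.
Qed.

Lemma horner_mx_minpolyZ n (g : 'M[int]_n.+1) p :
  minpolyZ g = map_poly intr p -> horner_mx g p = 0.
Proof.
move=> gE; apply: map_mx_intr_inj; rewrite map_mx0 map_horner_mx -gE.
exact: mx_root_minpoly.
Qed.

Lemma kerL_elementary0 n (B g : 'M[int]_n.+1) p : elementary B (kerL g p) 0.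
Proof. by move=> y _; exists 0; rewrite /kerL mul0mx /ratv map_mx0 scale0r. Qed.

Section BilinearForm.
Variables (N : nat) (B : 'M[int]_N).

Lemma bformDl u v w : bform B (u + v) w = bform B u w + bform B v w.
Proof. by rewrite /bform !mulmxDl mxE. Qed.

Lemma bformDr u v w : bform B u (v + w) = bform B u v + bform B u w.
Proof. by rewrite /bform linearD /= mulmxDr mxE. Qed.

Lemma bformZl a u v : bform B (a *: u) v = a * bform B u v.
Proof. by rewrite /bform -!scalemxAl mxE. Qed.

Lemma bformZr a u v : bform B u (a *: v) = a * bform B u v.
Proof. by rewrite /bform linearZ /= -scalemxAr mxE. Qed.

Lemma bformNl u v : bform B (- u) v = - bform B u v.
Proof. by rewrite -scaleN1r bformZl mulN1r. Qed.

Lemma bformNr u v : bform B u (- v) = - bform B u v.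
Proof. by rewrite -scaleN1r bformZr mulN1r. Qed.

Lemma bformC u v : B^T = B -> bform B u v = bform B v u.
Proof.
move=> B_sym; rewrite /bform -[in LHS](trmxK (u *m _ *m _)) [in LHS]mxE.
by rewrite !trmx_mul trmxK map_trmx B_sym mulmxA.
Qed.

End BilinearForm.

Section Isometry.
Variables (n : nat) (B g : 'M[int]_n.+1).
Hypotheses (B_sym : B^T = B) (g_isom : is_isometry B g).
Local Notation gQ := (map_mx (intr : int -> rat) g).
Local Notation evalQ p := (map_mx (intr : int -> rat) (horner_mx g p)).

Lemma bform_isometry u v : bform B (u *m gQ) (v *m gQ) = bform B u v.
Proof.
rewrite /bform trmx_mul !mulmxA -(mulmxA u) -(mulmxA u).
by rewrite map_trmx -!map_mxM g_isom.
Qed.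

Lemma bform_im_ker (e : rat) u v : e * e = 1 -> v *m (gQ - e%:M) = 0 ->
  bform B (u *m (gQ - e%:M)) v = 0.
Proof.
move=> ee /eqP; rewrite mulmxBr mul_mx_scalar subr_eq0 => /eqP vg.
have vE : v = e *: (v *m gQ) by rewrite vg scalerA ee scale1r.
rewrite mulmxBr mul_mx_scalar bformDl bformNl bformZl {1}vE bformZr.
by rewrite bform_isometry subrr.
Qed.

Lemma evalQM p r : evalQ (p * r) = evalQ p *m evalQ r.
Proof. by rewrite rmorphM map_mxM. Qed.

Lemma evalQ_XsubC (e : int) : evalQ ('X - e%:P) = gQ - (e%:~R)%:M.
Proof. by rewrite rmorphB /= horner_mx_X horner_mx_C map_mxB map_scalar_mx. Qed.

Lemma evalQ_nat (k : nat) : evalQ k%:R%:P = k%:R%:M.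
Proof. by rewrite horner_mx_C map_scalar_mx rmorph_nat. Qed.

Lemma bezout_scale_ker p r a c (k : nat) (w : 'rV[rat]_n.+1) :
  k%:R%:P = a * p + c * r -> w *m evalQ r = 0 -> k%:R *: w = w *m evalQ a *m evalQ p.
Proof.
move=> kE w_ker; rewrite -mul_mx_scalar -evalQ_nat kE.
by rewrite rmorphD map_mxD mulmxDr [c * r]mulrC !evalQM !mulmxA w_ker mul0mx addr0.
Qed.

Lemma ker_XsubC_orth (e : int) r k y w : e * e = 1 -> (0 < k)%N ->
  int_in_ideal ('X - e%:P) r k -> y *m evalQ ('X - e%:P) = 0 -> w *m evalQ r = 0 ->
  bform B y w = 0.
Proof.
move=> ee k_gt0 [a [c kE]] y_ker w_ker.
have : k%:R * bform B y w = 0.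
  rewrite -bformZr (bezout_scale_ker kE w_ker) bformC // evalQ_XsubC.
  by rewrite bform_im_ker // -?intrM ?ee // -evalQ_XsubC.
by move/eqP; rewrite mulf_eq0 pnatr_eq0 eqn0Ngt k_gt0 => /eqP.
Qed.

Lemma ker_X2sub1_orth p k y w : (0 < k)%N -> int_in_ideal p (('X - 1) * ('X + 1)) k ->
  y *m evalQ p = 0 -> w *m evalQ (('X - 1) * ('X + 1)) = 0 -> bform B y w = 0.
Proof.
move=> k_gt0 bez y_ker w_ker.
have orth e h : e * e = 1 -> int_in_ideal p (h * ('X - e%:P)) k ->
    forall v, v *m evalQ ('X - e%:P) = 0 -> bform B y v = 0.
  move=> ee /int_in_ideal_mulr /int_in_idealC bez_e v v_ker.
  by rewrite bformC //; apply: ker_XsubC_orth bez_e v_ker y_ker.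
have w2 : 2%:R *: w = w *m evalQ ('X + 1) - w *m evalQ ('X - 1).
  have twoE : ('X + 1) - ('X - 1) = 2%:R%:P :> {poly int} by rewrite polyC_natr; ring.
  by rewrite -mulmxBr -map_mxB -rmorphB /= twoE evalQ_nat mul_mx_scalar.
have : 2%:R * bform B y w = 0.
  rewrite -bformZr w2 bformDr bformNr (orth 1 ('X + 1)) ?(orth (-1) ('X - 1)) ?subrr //.
  - by rewrite polyCN polyC1 opprK.
  - by rewrite polyCN polyC1 opprK -mulmxA -evalQM.
  - by rewrite polyC1 mulrC.
  - by rewrite polyC1 -mulmxA -evalQM mulrC.
by move/eqP; rewrite mulf_eq0 pnatr_eq0 => /eqP.
Qed.

Lemma inQspan_kerL p y : inQspan (kerL g p) y -> y *m evalQ p = 0.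
Proof.
case=> d [d_gt0 [x [x_ker xE]]].
have : (d%:R *: y) *m evalQ p = 0 by rewrite -xE /ratv -map_mxM x_ker map_mx0.
by rewrite -scalemxAl => /eqP; rewrite scalemx_eq0 pnatr_eq0 eqn0Ngt d_gt0 => /eqP.
Qed.

Lemma kerL_ratv p x : ratv x *m evalQ p = 0 -> kerL g p x.
Proof. by move=> x_ker; apply: map_mx_intr_inj; rewrite map_mxM map_mx0. Qed.

Hypothesis unimod : unimodular B (@fullL n.+1).

Lemma kerL_elementary p r k : horner_mx g (p * r) = 0 -> int_in_ideal p r k ->
  (forall y w, y *m evalQ p = 0 -> w *m evalQ r = 0 -> bform B y w = 0) ->
  elementary B (kerL g p) k.
Proof.
move=> pr_ann [a [c kE]] orth y [y_span y_int].
have y_ker := inQspan_kerL y_span.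
have ann q : evalQ (q * (p * r)) = 0 by rewrite evalQM pr_ann map_mx0 mulmx0.
have ky_span : inQspan (@fullL n.+1) (k%:R *: y).
  case: y_span => d [d_gt0 [x [_ xE]]]; exists d; split=> //.
  exists (k%:R *: x); split=> //.
  by rewrite /ratv map_mxZ /= -/(ratv x) xE rmorph_nat !scalerA mulrC.
have ky_int z : fullL z -> bform B (k%:R *: y) (ratv z) \is a Num.int.
  move=> _; rewrite bformZl -bformZr.
  have -> : k%:R *: ratv z = ratv z *m evalQ (a * p) + ratv z *m evalQ (c * r).
    by rewrite -mulmxDr -map_mxD -rmorphD -kE evalQ_nat mul_mx_scalar.
  rewrite bformDr orth ?add0r //; last by rewrite -mulmxA -evalQM -mulrA ann mulmx0.
  rewrite -map_mxM; apply: y_int.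
  by apply: kerL_ratv; rewrite /ratv map_mxM -mulmxA -evalQM -mulrA [r * p]mulrC ann mulmx0.
have [x [_ xE]] := unimod (conj ky_span ky_int).
exists x; split; last by rewrite xE scale1r.
by apply: kerL_ratv; rewrite xE scale1r -scalemxAl y_ker scaler0.
Qed.

Lemma kerL_XsubC_elementary (e : int) r k : e * e = 1 ->
  horner_mx g (('X - e%:P) * r) = 0 -> int_in_ideal ('X - e%:P) r k ->
  elementary B (kerL g ('X - e%:P)) k.
Proof.
move=> ee ann bez; have [->|k_gt0] := posnP k; first exact: kerL_elementary0.
exact: kerL_elementary ann bez (fun y w => ker_XsubC_orth ee k_gt0 bez).
Qed.

Lemma kerL_X2sub1_elementary p k : horner_mx g (p * (('X - 1) * ('X + 1))) = 0 ->
  int_in_ideal p (('X - 1) * ('X + 1)) k -> elementary B (kerL g p) k.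
Proof.
move=> ann bez; have [->|k_gt0] := posnP k; first exact: kerL_elementary0.
exact: kerL_elementary ann bez (fun y w => ker_X2sub1_orth k_gt0 bez).
Qed.

Lemma cyclotomic_bezout_elementary m k0 k1 k2 :
  horner_mx g (('X - 1) * ('X + 1) * 'Phi_m) = 0 -> cyclotomic_bezout m k0 k1 k2 ->
  [/\ elementary B (kerL g 'Phi_m) k0, elementary B (kerL g ('X - 1)) k1
    & elementary B (kerL g ('X + 1)) k2].
Proof.
move=> ann [bez0 bez1 bez2]; split.
- by apply: kerL_X2sub1_elementary bez0; rewrite mulrC.
- rewrite -polyC1 in bez1 *; apply: kerL_XsubC_elementary bez1 => //.
  by rewrite polyC1 mulrA.
- have XaddE : 'X + 1 = 'X - (-1)%:P :> {poly int} by rewrite polyCN polyC1 opprK.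
  rewrite XaddE in bez2 *; apply: kerL_XsubC_elementary bez2 => //.
  by rewrite -XaddE mulrA [_ * (_ - 1)]mulrC.
Qed.

End Isometry.

Theorem proposition2p6 (m n : nat) (B g : 'M[int]_n.+1) :
  (3 <= m)%N -> ~~ odd m ->
  B^T = B -> \det B != 0 ->
  is_isometry B g ->
  minpolyZ g = map_poly intr ('Phi_1 * 'Phi_2 * 'Phi_m) ->
  unimodular B (@fullL n.+1) ->
  [/\ (exists k : nat, m = 2 ^ k)%N ->
        [/\ elementary B (kerL g 'Phi_m) 2,
            elementary B (kerL g ('X - 1)) 4 &
            elementary B (kerL g ('X + 1)) 4],
      (forall p k : nat, prime p -> odd p -> m = (2 * p ^ k)%N ->
          [/\ elementary B (kerL g 'Phi_m) p,
              elementary B (kerL g ('X + 1)) (2 * p) &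
              elementary B (kerL g ('X - 1)) 2])
    & ~ (exists k : nat, m = 2 ^ k)%N ->
      ~ (exists p k : nat, [/\ prime p, odd p & m = 2 * p ^ k]%N) ->
        [/\ unimodular B (kerL g 'Phi_m),
            elementary B (kerL g ('X - 1)) 2 &
            elementary B (kerL g ('X + 1)) 2]].
Proof.
(* nondegeneracy of B is implied by unimodularity *)
move=> m_ge3 m_even B_sym _ g_isom g_minpoly unimod.
have ann : horner_mx g (('X - 1) * ('X + 1) * 'Phi_m) = 0.
  by apply: horner_mx_minpolyZ; rewrite -Cyclotomic1 -Cyclotomic2.
have elem := cyclotomic_bezout_elementary B_sym g_isom unimod ann.
split.
- by case=> k mE; subst m; apply/elem/cyclotomic_bezout_pow2.
- move=> p k p_pr p_odd mE; subst m.
  by have [] := elem _ _ _ (cyclotomic_bezout_2pk p_pr p_odd m_ge3).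
- move=> not_pow2 not_2pk; apply/elem/cyclotomic_bezout_generic => //.
  exact: leq_trans m_ge3.
Qed.
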